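(* Let $X$ be a real reflexive Banach space and let $\{F_t\}_{t \in T}$ be a non-empty family of convex existence sets in $X$ directed by reverse inclusion, i.e. for any $t_1, t_2 \in T$ there is $t_3 \in T$ with $F_{t_3} \subset F_{t_1} \cap F_{t_2}$. If $F = \bigcap_{t \in T} F_t \neq \emptyset$, then $F$ is an existence set.
   Context: For a non-empty set $F \subset X$ and $x \in X$, let $R_F(x) = \{ d \in F : \|d-c\| \le \|x-c\| \text{ for all } c \in F\}$. A non-empty set $F \subset X$ is an existence set if $R_F(x) \neq \emptyset$ for every $x \in X$. *)

From HB Require Import structures.
From mathcomp Require Import all_boot all_order all_algebra.
From mathcomp Require Import all_classical all_reals all_analysis.
Set Implicit Arguments. Unset Strict Implicit. Unset Printing Implicit Defensive.
Import Order.TTheory GRing.Theory Num.Theory.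
Import numFieldNormedType.Exports.
Local Open Scope classical_set_scope.
Local Open Scope ring_scope.

Definition dual_elem {R : realType} {X : normedModType R} (f : X -> R) : Prop :=
  (forall (a : R) (x y : X), f (a *: x + y) = a * f x + f y) /\ continuous f.

(* Elements of the bidual X^** : linear functionals on X^* that are bounded
   w.r.t. the operator norm, i.e. |Phi f| <= C ||f|| for every f in X^*,
   written without the sup: whenever |f x| <= M |x| for all x, |Phi f| <= C M. *)
Definition bidual_elem {R : realType} {X : normedModType R}
  (Phi : (X -> R) -> R) : Prop :=
  (forall (a : R) (f g : X -> R), dual_elem f -> dual_elem g ->
      Phi (fun x => a * f x + g x) = a * Phi f + Phi g) /\
  exists C : R, forall (f : X -> R) (M : R), dual_elem f -> 0 <= M ->
      (forall x, `|f x| <= M * `|x|) -> `|Phi f| <= C * M.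

Definition reflexive_space {R : realType} (X : normedModType R) : Prop :=
  forall Phi : (X -> R) -> R, bidual_elem Phi ->
    exists x : X, forall f : X -> R, dual_elem f -> Phi f = f x.

Definition convex_set_of {R : realType} {X : normedModType R} (A : set X) : Prop :=
  forall x y : X, A x -> A y -> forall t : R, 0 <= t -> t <= 1 ->
    A (t *: x + (1 - t) *: y).

Definition RF {R : realType} {X : normedModType R} (F : set X) (x : X) : set X :=
  [set d | F d /\ forall c, F c -> `|d - c| <= `|x - c|].

Definition existence_set {R : realType} {X : normedModType R} (F : set X) : Prop :=
  F !=set0 /\ forall x : X, RF F x !=set0.

From HB Require Import structures.
From mathcomp Require Import all_boot all_order all_algebra.
From mathcomp Require Import all_classical all_reals all_analysis.
From mathcomp Require Import lra.
Import Order.TTheory GRing.Theory Num.Theory.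
Import numFieldNormedType.Exports.
Local Open Scope classical_set_scope.
Local Open Scope ring_scope.

(* Fix x. For each t pick d_t in F_t at least as close as x to every point of
   F = \bigcap_t F_t. The d_t are bounded, and d_s lies in the set S_t of such
   points of F_t as soon as F_s is contained in F_t. Along an ultrafilter
   refining this directed order every f(d_t), f in X^*, converges, and the
   limit functional lies in X^**; reflexivity represents it by a weak limit x0
   of (d_t). Each S_t is closed and convex, hence weakly closed by Hahn-Banach
   separation, so x0 lies in every S_t, i.e. x0 is in R_F(x). *)

Lemma le_inf_add {R : realType} (A B : set R) (c : R) :
  A !=set0 -> B !=set0 -> (forall a b, A a -> B b -> c <= a + b) ->
  c <= inf A + inf B.
Proof.
move=> A0 B0 cAB.
have cB b : B b -> c - b <= inf A.
  by move=> Bb; apply: lb_le_inf => // a Aa; have := cAB a b Aa Bb; lra.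
suff : c - inf A <= inf B by lra.
by apply: lb_le_inf => // b Bb; have := cB b Bb; lra.
Qed.

Section Subnorm.
Context {R : realType} {X : normedModType R}.

(* The norm bound makes every linear minorant continuous. *)
Definition subnorm (q : X -> R) :=
  [/\ forall x y, q (x + y) <= q x + q y,
      forall t x, 0 < t -> q (t *: x) <= t * q x &
      forall x, q x <= `|x|].

Context {q : X -> R} (sq : subnorm q).

Lemma subnorm0 : q 0 = 0.
Proof.
have [_ qZ qn] := sq; have := qn 0; have := qZ 2 0 (ltr0Sn _ 1).
by rewrite normr0 scaler0; lra.
Qed.

Lemma subnormN x : - q (- x) <= q x.
Proof.
by have [qD _ _] := sq; have := qD x (- x); rewrite subrr subnorm0; lra.
Qed.

Lemma subnormZ t x : 0 <= t -> q (t *: x) = t * q x.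
Proof.
rewrite le_eqVlt => /predU1P[<-|t0]; first by rewrite scale0r subnorm0 mul0r.
have [_ qZ _] := sq; apply/le_anti; rewrite qZ //=.
have := qZ t^-1 (t *: x); rewrite invr_gt0 scalerA mulVf ?gt_eqF // scale1r.
by move=> /(_ t0); rewrite -ler_pdivlMl // invrK.
Qed.

Lemma subnorm_ge x : - `|x| <= q x.
Proof.
have [_ _ qn] := sq; have := qn (- x); have := subnormN x.
by rewrite normrN; lra.
Qed.

End Subnorm.

Section ConeInf.
Context {R : realType} {X : normedModType R}.

(* [cone_inf q K r] is the largest sublinear minorant of [q] that is at most
   [- r] on [- K]. *)
Definition cone_values (q : X -> R) (K : set X) (r : R) (x : X) : set R :=
  [set e | exists m k, [/\ 0 <= m, K k & e = q (x + m *: k) - m * r]].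

Definition cone_inf q K r x := inf (cone_values q K r x).

Context {q : X -> R} {K : set X} {r : R} (sq : subnorm q) (K0 : K !=set0)
  (cK : convex_set_of K) (Kr : forall k, K k -> r <= q k).

Lemma cone_values_neq0 x : cone_values q K r x !=set0.
Proof. by have [k Kk] := K0; exists (q (x + 0 *: k) - 0 * r), 0, k. Qed.

Lemma cone_values_lbound x : lbound (cone_values q K r x) (- q (- x)).
Proof.
move=> _ [m [k [m0 Kk ->]]]; have [qD _ _] := sq.
have := qD (x + m *: k) (- x); rewrite addrC addKr subnormZ // => qmk.
have : m * r <= m * q k by rewrite ler_wpM2l // Kr.
lra.
Qed.

Lemma cone_inf_le_value {x e} :
  cone_values q K r x e -> cone_inf q K r x <= e.
Proof. by apply: ge_inf; exists (- q (- x)); apply: cone_values_lbound. Qed.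

Lemma cone_inf_le x : cone_inf q K r x <= q x.
Proof.
have [k Kk] := K0; apply: cone_inf_le_value.
by exists 0, k; rewrite scale0r addr0 mul0r subr0.
Qed.

Lemma cone_inf_opp k : K k -> cone_inf q K r (- k) <= - r.
Proof.
move=> Kk; have : cone_values q K r (- k) (q (- k + 1 *: k) - 1 * r).
  by exists 1, k.
by move/cone_inf_le_value; rewrite scale1r addNr subnorm0 // mul1r sub0r.
Qed.

Lemma cone_values_add x y e1 e2 :
  cone_values q K r x e1 -> cone_values q K r y e2 ->
  exists2 e, cone_values q K r (x + y) e & e <= e1 + e2.
Proof.
move=> [m1 [k1 [m10 Kk1 ->]]] [m2 [k2 [m20 Kk2 ->]]]; have [qD _ _] := sq.
have [m0|m0] := eqVneq (m1 + m2) 0.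
  have [-> ->] : m1 = 0 /\ m2 = 0 by split; lra.
  exists (q (x + y + 0 *: k1) - 0 * r); first by exists 0, k1.
  by rewrite !scale0r !addr0 !mul0r !subr0.
have mp : 0 < m1 + m2 by rewrite lt_def m0 addr_ge0.
pose t := m1 / (m1 + m2).
have t0 : 0 <= t by rewrite divr_ge0 // ltW.
have t1 : t <= 1 by rewrite ler_pdivrMr // mul1r lerDl.
pose k := t *: k1 + (1 - t) *: k2.
exists (q (x + y + (m1 + m2) *: k) - (m1 + m2) * r).
  by exists (m1 + m2), k; split; [exact: ltW|exact: cK|].
have -> : (m1 + m2) *: k = m1 *: k1 + m2 *: k2.
  rewrite scalerDr !scalerA mulrBr mulr1 !(mulrC (m1 + m2)) divfK //.
  by rewrite [m1 + m2]addrC addrK.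
by rewrite (addrACA x); have := qD (x + m1 *: k1) (y + m2 *: k2); lra.
Qed.

Lemma cone_inf_subnorm : subnorm (cone_inf q K r).
Proof.
have [_ _ qn] := sq; split.
- move=> x y; apply: le_inf_add; try exact: cone_values_neq0.
  move=> e1 e2 /cone_values_add /[apply] -[e /cone_inf_le_value].
  exact: le_trans.
- move=> t x t0; rewrite mulrC -ler_pdivrMr //.
  apply: lb_le_inf; first exact: cone_values_neq0.
  move=> _ [m [k [m0 Kk ->]]]; rewrite ler_pdivrMr //.
  have tm : cone_values q K r (t *: x) (q (t *: x + (t * m) *: k) - t * m * r).
    by exists (t * m), k; split => //; rewrite mulr_ge0 // ltW.
  apply: (le_trans (cone_inf_le_value tm)).
  rewrite -scalerA -scalerDr subnormZ //; last exact: ltW.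
  by rewrite mulrBl mulrC [m * r * t]mulrC mulrA.
- by move=> x; apply: le_trans (cone_inf_le x) (qn x).
Qed.

End ConeInf.

Section HahnBanach.
Context {R : realType} {X : normedModType R}.

Section ChainInf.
Variable A : set (X -> R).
Hypotheses (A0 : A !=set0) (sA : forall q, A q -> subnorm q)
  (totA : forall q q', A q -> A q' ->
     (forall x, q x <= q' x) \/ (forall x, q' x <= q x)).

Definition chain_inf x := inf [set q x | q in A].

Lemma chain_inf_le {q} x : A q -> chain_inf x <= q x.
Proof.
move=> Aq; apply: ge_inf; last by exists q.
by exists (- `|x|) => _ [q' Aq' <-]; exact: subnorm_ge (sA _ Aq') x.
Qed.

Lemma chain_inf_subnorm : subnorm chain_inf.
Proof.
have values_neq0 x : [set q x | q in A] !=set0.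
  by have [q Aq] := A0; exists (q x), q.
split.
- move=> x y; apply: le_inf_add => // _ _ [q Aq <-] [q' Aq' <-].
  have [[qD _ _] [qD' _ _]] := (sA _ Aq, sA _ Aq').
  have [qq'|q'q] := totA _ _ Aq Aq'.
  + apply: le_trans (chain_inf_le _ Aq) _.
    by apply: le_trans (qD _ _) _; rewrite lerD2l.
  + apply: le_trans (chain_inf_le _ Aq') _.
    by apply: le_trans (qD' _ _) _; rewrite lerD2r.
- move=> t x t0; rewrite mulrC -ler_pdivrMr //.
  apply: lb_le_inf => // _ [q Aq <-]; have [_ qZ _] := sA _ Aq.
  rewrite ler_pdivrMr // mulrC.
  exact: le_trans (chain_inf_le _ Aq) (qZ _ _ t0).
- move=> x; have [q Aq] := A0; have [_ _ qn] := sA _ Aq.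
  exact: le_trans (chain_inf_le _ Aq) (qn x).
Qed.

End ChainInf.

(* Minimality forces [q = cone_inf q [set y] (q y)], whence [q (- y) <= - q y]
   by [cone_inf_opp]: a minimal sublinear functional is odd, hence linear. *)
Lemma subnorm_minimal_scalar (q : X -> R) : subnorm q ->
  (forall q', subnorm q' -> (forall x, q' x <= q x) -> q' = q) -> scalar q.
Proof.
move=> sq qmin.
have qN y : q (- y) = - q y.
  have y0 : [set y] !=set0 by exists y.
  have cy : convex_set_of [set y].
    by move=> _ _ -> -> t _ _; rewrite -scalerDl addrC subrK scale1r.
  have y_le k : [set y] k -> q y <= q k by move=> ->.
  have := qmin _ (cone_inf_subnorm sq y0 cy y_le) (cone_inf_le sq y0 y_le).
  move=> qE; have := cone_inf_opp sq y_le _ (erefl y); rewrite qE.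
  by have := subnormN sq y; lra.
have [qD _ _] := sq.
have qA x y : q (x + y) = q x + q y.
  apply/le_anti; rewrite qD /=.
  by have := qD (- x) (- y); rewrite -opprD !qN; lra.
move=> a x y; rewrite qA; congr (_ + _).
have [a0|a0] := leP 0 a; first exact: subnormZ.
have Na0 : 0 <= - a by rewrite oppr_ge0 ltW.
by have := subnormZ sq (- a) x Na0; rewrite scaleNr qN mulNr => /oppr_inj.
Qed.

Lemma hahn_banach {p : X -> R} : subnorm p ->
  exists2 f : X -> R, scalar f & forall x, f x <= p x.
Proof.
move=> sp.
pose T := {q : X -> R | subnorm q /\ forall x, q x <= p x}.
pose below (a b : T) := `[< forall x, sval b x <= sval a x >].
have [m mmin] : exists m : T, forall s, below m s -> s = m.
  apply: Zorn.
  - by move=> a; apply/asboolP.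
  - move=> a b c /asboolP ab /asboolP bc; apply/asboolP => x.
    exact: le_trans (bc x) (ab x).
  - move=> [a Ha] [b Hb] /asboolP /= ab /asboolP /= ba; apply: eq_exist.
    by apply/funext => x; apply/le_anti; rewrite ab ba.
  move=> C Ctot; have [[a0 Ca0]|C0] := pselect (C !=set0); last first.
    exists (exist _ p (conj sp (fun x => lexx _))) => s Cs.
    by exfalso; apply: C0; exists s.
  pose A := [set sval a | a in C].
  have sA q : A q -> subnorm q by move=> [a _ <-]; case: (svalP a).
  have totA q q' : A q -> A q' ->
      (forall x, q x <= q' x) \/ (forall x, q' x <= q x).
    move=> [a Ca <-] [b Cb <-].
    by have [/asboolP|/asboolP] := Ctot a b Ca Cb; [right|left].
  have Aa0 : A (sval a0) by exists a0.
  have infp x : chain_inf A x <= p x.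
    exact: le_trans (chain_inf_le _ sA x Aa0) ((svalP a0).2 x).
  have sinf := chain_inf_subnorm _ (ex_intro _ _ Aa0) sA totA.
  exists (exist _ (chain_inf A) (conj sinf infp)) => a Ca.
  by apply/asboolP => x /=; apply: chain_inf_le => //; exists a.
have [sm mp] := svalP m.
exists (sval m) => //; apply: subnorm_minimal_scalar => // q sq qm.
have qp x : q x <= p x by exact: le_trans (qm x) (mp x).
have := mmin (exist _ q (conj sq qp)); rewrite /below /=.
by move=> /(_ (asboolT qm)) /(congr1 sval).
Qed.

End HahnBanach.

Section Separation.
Context {R : realType} {X : normedModType R}.

Definition scalar_linear {f : X -> R} (fl : scalar f) : {linear X -> R^o} :=
  HB.pack_for {linear X -> R^o} f (GRing.isLinear.Build R X R^o *:%R f fl).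

Lemma scalar_continuous_bounded {f : X -> R} : scalar f -> continuous f ->
  exists2 M, 0 < M & forall x, `|f x| <= M * `|x|.
Proof.
move=> fl fc; have f0 : {for 0, continuous (scalar_linear fl)} by exact: fc.
have := (linear_boundedP (scalar_linear fl)).1 (continuous_linear_bounded 0 f0).
by move=> /pinfty_ex_gt0 [M M0 fM]; exists M.
Qed.

Lemma scalar_norm_le_continuous {f : X -> R} : scalar f ->
  (forall x, `|f x| <= `|x|) -> continuous f.
Proof.
move=> fl fn; apply: (bounded_linear_continuous (f := scalar_linear fl)).
apply/linear_boundedP; near=> M => x.
by apply: le_trans (fn x) _; rewrite ler_peMl //; near: M;
  apply: nbhs_pinfty_ge.
Unshelve. all: by end_near.
Qed.

Lemma convex_separation {C : set X} {x0 : X} {r : R} :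
  convex_set_of C -> C !=set0 -> 0 < r -> (forall c, C c -> r <= `|x0 - c|) ->
  exists2 f, dual_elem f & forall c, C c -> f c <= f x0 - r.
Proof.
move=> cC [c0 Cc0] r0 Cr.
pose K := [set x0 - c | c in C].
have cK : convex_set_of K.
  move=> _ _ [c1 C1 <-] [c2 C2 <-] t t0 t1.
  exists (t *: c1 + (1 - t) *: c2); first exact: cC.
  by rewrite !scalerBr opprD addrACA -scalerDl (addrC t) subrK scale1r.
have sn : subnorm (fun x : X => `|x|).
  by split=> // [x y|t x t0]; [exact: ler_normD|rewrite normrZ gtr0_norm].
have Kr k : K k -> r <= `|k| by move=> [c Cc <-]; exact: Cr.
have K0 : K !=set0 by exists (x0 - c0), c0.
have sq := cone_inf_subnorm sn K0 cK Kr.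
have [f fl fq] := hahn_banach sq.
have [_ _ qn] := sq.
have fn x : `|f x| <= `|x|.
  have f_le y : f y <= `|y| := le_trans (fq y) (qn y).
  have fN : f (- x) = - f x := linearN (scalar_linear fl) x.
  by rewrite ler_norml f_le andbT lerNl -fN -normrN f_le.
exists f; first by split; [exact: fl|exact: scalar_norm_le_continuous].
move=> c Cc; have : f (c - x0) <= - r.
  apply: le_trans (fq _) _; rewrite -opprB.
  by apply: cone_inf_opp => //; exists c.
have fB : f (c - x0) = f c - f x0 := linearB (scalar_linear fl) c x0.
by rewrite fB; lra.
Qed.

End Separation.

Lemma ultra_bounded_cvg {R : realType} {T : Type} {U : set_system T}
    {g : T -> R} (M : R) :
  UltraFilter U -> (forall t, `|g t| <= M) -> exists l : R, g @ U --> l.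
Proof.
move=> UU gM; have [|l [_ gl]] := @segment_compact R (- M) M (g @ U) _.
  by apply: nearW => t /=; rewrite in_itv /= -ler_norml.
exists l => N Nl; have [//|gNC] := in_ultra_setVsetC (g @^-1` N) UU.
by have [y [nNy Ny]] := gl (~` N) N gNC Nl; case: (nNy Ny).
Qed.

Section WeakLimits.
Context {R : realType} {X : normedModType R} {T : Type}.

(* [x0] represents the bidual element [f |-> lim_U f (d t)]. *)
Lemma reflexive_ultralimit {U : set_system T} {d : T -> X} {B : R} :
  reflexive_space X -> UltraFilter U -> (forall t, `|d t| <= B) ->
  exists x0, forall f, dual_elem f -> f (d t) @[t --> U] --> f x0.
Proof.
move=> refl UU dB.
pose Phi (f : X -> R) := lim (f (d t) @[t --> U]).
have Phi_cvg f : dual_elem f -> f (d t) @[t --> U] --> Phi f.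
  move=> [fl fc]; have [M M0 fM] := scalar_continuous_bounded fl fc.
  have [l fdl] : exists l : R, f (d t) @[t --> U] --> l.
    apply: (ultra_bounded_cvg (M * B) UU) => t.
    by apply: le_trans (fM _) _; rewrite ler_wpM2l // ltW.
  by rewrite /Phi (cvg_lim _ fdl).
have PhiB : bidual_elem Phi.
  split=> [a f g df dg|].
    apply: cvg_lim => //.
    by apply: cvgD; [apply: cvgMl_tmp|]; apply: Phi_cvg.
  exists B => f M df M0 fM.
  have /all_and2 [fdBl fdBr] t : - (B * M) <= f (d t) /\ f (d t) <= B * M.
    apply/andP; rewrite -ler_norml (le_trans (fM _)) //.
    by rewrite mulrC ler_wpM2r.
  rewrite ler_norml; apply/andP; split.
    apply: (closed_cvg _ (@closed_ge R (- (B * M))) _ _ (Phi_cvg f df)).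
    exact: nearW.
  apply: (closed_cvg _ (@closed_le R (B * M)) _ _ (Phi_cvg f df)).
  exact: nearW.
have [x0 Phix0] := refl Phi PhiB.
by exists x0 => f df; rewrite -Phix0 //; exact: Phi_cvg.
Qed.

(* Mazur's theorem: closed convex sets are weakly closed. *)
Lemma closed_convex_weak_limit {U : set_system T} {FU : ProperFilter U}
    {d : T -> X} {C : set X} {x0 : X} :
  closed C -> convex_set_of C -> (\forall t \near U, C (d t)) ->
  (forall f, dual_elem f -> f (d t) @[t --> U] --> f x0) -> C x0.
Proof.
move=> Ccl Ccvx dC dx0; apply: contrapT => Cx0.
have [e e0 eC] : exists2 e, 0 < e & forall c, C c -> e <= `|x0 - c|.
  have /nbhs_ballP [e e0 eCC] : nbhs x0 (~` C).
    by apply: open_nbhs_nbhs; split; [exact: closed_openC|exact: Cx0].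
  exists e => // c Cc; rewrite leNgt; apply/negP => ce.
  by apply: (eCC c) => //; rewrite -ball_normE.
have [t Ct] := filter_ex dC.
have [f df fC] := convex_separation Ccvx (ex_intro _ _ Ct) e0 eC.
have : f x0 <= f x0 - e.
  apply: (closed_cvg _ (@closed_le R (f x0 - e)) _ _ (dx0 f df)).
  by apply: filterS dC => s; exact: fC.
lra.
Qed.

End WeakLimits.

Section NearerPoints.
Context {R : realType} {X : normedModType R}.

Lemma existence_set_closed {G : set X} : existence_set G -> closed G.
Proof.
move=> [_ GR] x Gx; have [p [Gp pG]] := GR x.
suff -> : x = p by [].
apply/subr0_eq/normr0_eq0/le_anti; rewrite normr_ge0 andbT.
apply/ler_addgt0Pr => e e0; rewrite add0r.
have [g [Gg xg]] := Gx _ (nbhsx_ballx x _ (divr_gt0 e0 (ltr0Sn _ 1))).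
move: xg; rewrite -ball_normE /= => xg.
have := pG g Gg; have := ler_distD g x p; rewrite [`|g - p|]distrC; lra.
Qed.

Definition nearer_points (C B : set X) (x : X) : set X :=
  [set d | C d /\ forall c, B c -> `|d - c| <= `|x - c|].

Lemma RF_nearer_points {C B : set X} {x : X} :
  B `<=` C -> RF C x `<=` nearer_points C B x.
Proof. by move=> BC d [Cd dC]; split=> // c /BC /dC. Qed.

Lemma nearer_pointsS {C C' B : set X} {x : X} :
  C `<=` C' -> nearer_points C B x `<=` nearer_points C' B x.
Proof. by move=> CC' d [/CC' C'd dB]. Qed.

Lemma nearer_points_norm_le {C B : set X} {x d c : X} :
  nearer_points C B x d -> B c -> `|d| <= `|x - c| + `|c|.
Proof.
move=> [_ dB] Bc; have := dB c Bc; have := ler_normD (d - c) c.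
by rewrite subrK; lra.
Qed.

Lemma nearer_points_convex (C B : set X) x :
  convex_set_of C -> convex_set_of (nearer_points C B x).
Proof.
move=> cC y z [Cy yB] [Cz zB] a a0 a1; split=> [|c Bc]; first exact: cC.
have -> : a *: y + (1 - a) *: z - c = a *: (y - c) + (1 - a) *: (z - c).
  by rewrite !scalerBr addrACA -opprD -scalerDl (addrC a) subrK scale1r.
apply: le_trans (ler_normD _ _) _.
have a1' : 0 <= 1 - a by rewrite subr_ge0.
rewrite !normrZ (ger0_norm a0) (ger0_norm a1').
have := ler_wpM2l a0 (yB c Bc); have := ler_wpM2l a1' (zB c Bc).
lra.
Qed.

Lemma nearer_points_closed (C B : set X) x :
  closed C -> closed (nearer_points C B x).
Proof.
move=> Ccl.
have -> : nearer_points C B x = C `&`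
    \bigcap_(c in B) ((fun d => `|d - c|) @^-1` [set s | s <= `|x - c|]).
  by apply/seteqP; split=> d [Cd dB]; split=> // c /dB.
apply: closedI => //; apply: closed_bigI => c _.
apply: preimage_closed; last exact: closed_le.
by move=> d _; apply: cvg_norm; apply: cvgB; [exact: cvg_id|exact: cvg_cst].
Qed.

End NearerPoints.

Section DirectedFamily.
Context {T U : Type} (F : T -> set U).

Definition tail_filter : set_system T :=
  [set A | exists t, forall s, F s `<=` F t -> A s].

Lemma tail_filter_proper : inhabited T ->
  (forall t1 t2, exists t3, F t3 `<=` F t1 `&` F t2) ->
  ProperFilter tail_filter.
Proof.
move=> [t0] dirF; apply: Build_ProperFilter_ex.
  by move=> A [t At]; exists t; apply: At.
split; first by exists t0.
- move=> A1 A2 [t1 A1t] [t2 A2t]; have [t3 Ft3] := dirF t1 t2.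
  exists t3 => s Fs; split; [apply: A1t|apply: A2t]; by move=> y /Fs /Ft3 [].
- by move=> A1 A2 A12 [t At]; exists t => s /At /A12.
Qed.

End DirectedFamily.

Theorem lemma15 (R : realType) (X : completeNormedModType R) (T : Type)
  (F : T -> set X) :
  reflexive_space X ->
  inhabited T ->
  (forall t, convex_set_of (F t)) ->
  (forall t, existence_set (F t)) ->
  (forall t1 t2, exists t3, F t3 `<=` F t1 `&` F t2) ->
  \bigcap_(t in [set: T]) F t !=set0 ->
  existence_set (\bigcap_(t in [set: T]) F t).
Proof.
move=> refl T0 cvxF exF dirF [c0 Fc0]; set Fi := \bigcap_(t in _) F t.
have FiF t : Fi `<=` F t by move=> c /(_ t I).
split=> [|x]; first by exists c0.
pose S t := nearer_points (F t) Fi x.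
have S0 t : exists d, S t d.
  have [d Rd] := (exF t).2 x.
  by exists d; exact: RF_nearer_points (FiF t) _ Rd.
have [d dS] := choice S0.
have [U [UU tailU]] := ultraFilterLemma (tail_filter_proper F T0 dirF).
have [x0 dx0] := reflexive_ultralimit refl UU
  (fun t => nearer_points_norm_le (dS t) Fc0).
have Sx0 t : S t x0.
  apply: (closed_convex_weak_limit _ _ _ dx0).
  - exact: nearer_points_closed (existence_set_closed (exF t)).
  - exact: nearer_points_convex (cvxF t).
  - by apply: tailU; exists t => s Fst; exact: nearer_pointsS Fst _ (dS s).
exists x0; split=> [t _|c Fic]; first by have [] := Sx0 t.
by case: T0 => t0; have [_] := Sx0 t0; apply.
Qed.
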